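(* There is an absolute constant $c>0$ with the following property. Let $q\ge 2$ be a prime power and let $R$ be a finite local ring containing the field $\mathbb{F}_q$ as a subring, with $d=\dim_{\mathbb{F}_q}R$ and $\delta=\dim_{\mathbb{F}_q}(R\setminus R^* )$, where $R^*$ is the set of units of $R$. If $d=2+\delta$, then the chain geometry $\Sigma(\mathbb{F}_q,R)$ contains a blocking set of size at most $c\,q^{d-1}\log q$ (i.e., of size $O(q^{d-1}\log q)$).
   Context: All rings are associative with unit element $1\neq 0$, and subrings share the unit. $R^2$ is regarded as a left $R$-module. The projective line $\mathbb{P}(R)$ is the set of all submodules of $R^2$ of the form $R(a,b)$ where $(a\ b)$ is the first row of some invertible $2\times 2$ matrix over $R$. For a field $K\subseteq R$ (as a subring), $\mathbb{P}(K)$ is embedded in $\mathbb{P}(R)$ via $K(a,b)\mapsto R(a,b)$. The chain geometry $\Sigma(K,R)$ has point set $\mathbb{P}(R)$ and its blocks, called chains, are the sets $\mathbb{P}(K)^g$ with $g\in\mathrm{GL}_2(R)$. A blocking set is a set $B$ of points such that every chain contains at least one element of $B$. *)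

From HB Require Import structures.
From mathcomp Require Import all_boot all_order all_algebra.
From Stdlib Require Reals.
Set Implicit Arguments. Unset Strict Implicit. Unset Printing Implicit Defensive.
Import GRing.Theory.
Local Open Scope ring_scope.

Section ChainGeometry.
Variables (K : finFieldType) (R : finUnitRingType) (f : {rmorphism K -> R}).

Definition local_ring :=
  [/\ forall x y : R, x \isn't a GRing.unit -> y \isn't a GRing.unit ->
        x + y \isn't a GRing.unit,
      forall x y : R, y \isn't a GRing.unit -> x * y \isn't a GRing.unit
    & forall x y : R, x \isn't a GRing.unit -> x * y \isn't a GRing.unit].

Definition is_Kbasis (S : pred R) (n : nat) (b : n.-tuple R) :=
  [/\ forall i : 'I_n, tnth b i \in S,
      forall x, x \in S -> exists c : {ffun 'I_n -> K},
          x = \sum_(i < n) f (c i) * tnth b i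
    & forall c : {ffun 'I_n -> K},
          \sum_(i < n) f (c i) * tnth b i = 0 -> forall i, c i = 0].

Definition Kdim_is (S : pred R) (n : nat) := exists b : n.-tuple R, is_Kbasis S b.

(* invertible 2x2 matrices over the (possibly noncommutative) ring R *)
Definition invertible2 (g : 'M[R]_2) :=
  exists h : 'M[R]_2, g *m h = 1%:M /\ h *m g = 1%:M.

Definition submod (a b : R) : {set R * R} := [set (r * a, r * b) | r : R].

Definition admissible (a b : R) :=
  exists g : 'M[R]_2, invertible2 g /\ g 0 0 = a /\ g 0 1 = b.

Definition is_point (p : {set R * R}) := exists a b, admissible a b /\ p = submod a b.

Definition act (g : 'M[R]_2) (a b : R) : {set R * R} :=
  submod (a * g 0 0 + b * g 1 0) (a * g 0 1 + b * g 1 1).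

Definition on_chain (g : 'M[R]_2) (p : {set R * R}) :=
  exists x y : K, (x, y) != (0, 0) /\ p = act g (f x) (f y).

Definition blocking_set (B : {set {set R * R}}) :=
  (forall p, p \in B -> is_point p) /\
  (forall g : 'M[R]_2, invertible2 g -> exists p, p \in B /\ on_chain g p).

End ChainGeometry.

From HB Require Import structures.
From mathcomp Require Import all_boot all_order all_algebra.
From Stdlib Require Reals.
From mathcomp Require Import zify.

Set Implicit Arguments. Unset Strict Implicit. Unset Printing Implicit Defensive.
Import GRing.Theory.

(* The ideal M of nonunits has q^(d-2) elements, so the residue field R/M has
   q^2 elements. Reduction modulo M maps P(R) onto the projective line over
   R/M, with |M| points over each of its q^2+1 points, and maps every chain
   onto at least q+1 of them; this image depends only on the matrix modulo M,
   so there are at most q^8 images. Greedily adding points, each of which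
   hits at least a 1/q fraction of the images still missed, gives O(q log q)
   points meeting every image, and their preimage in P(R) is a blocking set
   of size O(q^(d-1) log q). *)

Lemma bernoulli_nat a n : a ^ n.+1 + n.+1 * a ^ n <= a.+1 ^ n.+1.
Proof.
elim: n => [|n IH]; first by rewrite muln1 addn1.
rewrite [a.+1 ^ n.+2]expnS; apply: leq_trans (leq_mul (leqnn a.+1) IH).
rewrite [a ^ n.+2]expnS [a ^ n.+1]expnS; nia.
Qed.

Lemma predn_exp_mul_le q h : 0 < q -> q.-1 ^ (q * h) * 2 ^ h <= q ^ (q * h).
Proof.
case: q => // a _; case: h => [|h]; first by rewrite !muln0.
rewrite !expnM -expnMn leq_exp2r //=.
have := bernoulli_nat a a; rewrite expnS; nia.
Qed.

Section GreedyHittingSet.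
Variables (T I : finType) (F : I -> {set T}) (V : {set T}) (k q : nat).
Hypothesis V_gt0 : 0 < #|V|.
Hypothesis cardV : #|V| <= k * q.

Definition large_subfamily (J : {set I}) :=
  forall i, i \in J -> F i \subset V /\ k <= #|F i|.

Definition missed (J : {set I}) (S : {set T}) := [set i in J | [disjoint F i & S]].

Lemma exists_popular_point (J : {set I}) : large_subfamily J ->
  exists x, #|J| * k <= #|[set i in J | x \in F i]| * #|V|.
Proof.
move=> largeJ; case/card_gt0P: V_gt0 => x0 _.
pose c x := #|[set i in J | x \in F i]|.
have double_count : \sum_(x in V) c x = \sum_(i in J) #|F i|.
  rewrite (eq_bigr (fun x => \sum_(i in J) (x \in F i : nat))); last first.
    by move=> x _; rewrite /c -sum1_card big_mkcond [RHS]big_mkcond /=;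
       apply: eq_bigr => i _; rewrite inE; case: (i \in J); case: (x \in F i).
  rewrite exchange_big /=; apply: eq_bigr => i /largeJ[/subsetP FV _].
  rewrite -sum1_card big_mkcond [RHS]big_mkcond /=; apply: eq_bigr => x _.
  by case xF: (x \in F i); [rewrite FV | case: (x \in V)].
exists [arg max_(x > x0) c x]; case: arg_maxnP => // y _ y_max.
rewrite -sum_nat_const mulnC -sum_nat_const.
apply: leq_trans (_ : \sum_(i in J) #|F i| <= _).
  by apply: leq_sum => i /largeJ[].
by rewrite -double_count; apply: leq_sum => x _; apply: y_max.
Qed.

Lemma greedy_hitting n (J : {set I}) : large_subfamily J ->
  exists S : {set T}, #|S| <= n /\ #|missed J S| * q ^ n <= #|J| * q.-1 ^ n.
Proof.
elim: n J => [|n IH] J largeJ.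
  exists set0; rewrite cards0 !muln1; split=> //.
  by apply/subset_leq_card/subsetP => i; rewrite inE => /andP[].
have [x popular_x] := exists_popular_point largeJ.
pose J' := [set i in J | x \notin F i].
have largeJ' : large_subfamily J' by move=> i; rewrite inE => /andP[/largeJ].
have [S [cardS missedS]] := IH J' largeJ'.
exists (x |: S); split; first by rewrite cardsU1 -add1n leq_add // leq_b1.
have sub_missed : missed J (x |: S) \subset missed J' S.
  apply/subsetP => i; rewrite !inE => /andP[-> disj] /=.
  by rewrite (disjointFl disj (setU11 x S)) (disjointWr (subsetUr _ _) disj).
have cardJ : #|J'| + #|[set i in J | x \in F i]| = #|J|.
  rewrite -(cardsID [set i | x \in F i] J) addnC.
  by congr (_ + _); apply: eq_card => i; rewrite !inE andbC.
have shrinkJ : #|J'| * q <= #|J| * q.-1.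
  rewrite -(leq_pmul2r V_gt0).
  have : #|J| * #|V| <= #|J| * k * q by rewrite -mulnA leq_mul2l cardV orbT.
  nia.
rewrite expnS; apply: leq_trans (leq_mul (subset_leq_card sub_missed) (leqnn _)) _.
rewrite mulnCA; apply: leq_trans (leq_mul (leqnn q) missedS) _.
rewrite expnS; nia.
Qed.

Lemma exists_hitting_set h (J : {set I}) : 0 < q -> large_subfamily J ->
  #|J| < 2 ^ h -> exists S : {set T}, #|S| <= q * h /\ forall i, i \in J -> F i :&: S != set0.
Proof.
move=> q_gt0 largeJ cardJ; have [S [cardS missedS]] := greedy_hitting (q * h) largeJ.
exists S; split=> // i iJ; rewrite setI_eq0.
suff missed0 : missed J S = set0.
  by apply: contraT => /negbNE disj; have := in_set0 i; rewrite -missed0 inE iJ disj.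
have q_pow_gt0 : 0 < q ^ (q * h) by rewrite expn_gt0 q_gt0.
have : #|missed J S| * (2 ^ h * q ^ (q * h)) < 1 * (2 ^ h * q ^ (q * h)).
  apply: (@leq_ltn_trans (#|J| * q ^ (q * h))); last by rewrite mul1n ltn_pmul2r.
  rewrite mulnCA; apply: leq_trans (leq_mul (leqnn _) missedS) _.
  by rewrite mulnCA leq_mul2l mulnC predn_exp_mul_le ?orbT.
rewrite ltn_pmul2r ?muln_gt0 ?q_pow_gt0 ?expn_gt0 //.
by rewrite ltnS leqn0 cards_eq0 => /eqP.
Qed.
End GreedyHittingSet.

Local Open Scope ring_scope.

Lemma card_Kspace (K : finFieldType) (R : finUnitRingType) (f : {rmorphism K -> R})
    (P : pred R) n : Kdim_is f P n -> 0 \in P ->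
  (forall k x y, x \in P -> y \in P -> f k * x + y \in P) -> #|P| = (#|K| ^ n)%N.
Proof.
move=> [b [bP bspan bfree]] P0 P_lin.
pose comb (c : {ffun 'I_n -> K}) := \sum_(i < n) f (c i) * tnth b i.
have comb_inj : injective comb.
  move=> c1 c2 e; apply/ffunP => i; apply/eqP; rewrite -subr_eq0; apply/eqP.
  transitivity ([ffun i => c1 i - c2 i] i); first by rewrite ffunE.
  apply: bfree; under eq_bigr => j _ do rewrite ffunE rmorphB mulrBl.
  by rewrite sumrB -/(comb c1) e subrr.
have -> : (#|K| ^ n)%N = #|comb @: [set: {ffun 'I_n -> K}]|.
  by rewrite card_imset // cardsT card_ffun card_ord.
apply: eq_card => x; apply/idP/imsetP => [/bspan[c ->]|[c _ ->]]; first by exists c.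
apply: (big_ind (fun x => x \in P)) => // [x1 x2 Px1 Px2|i _].
  by rewrite -[x1]mul1r -(rmorph1 f) P_lin.
by rewrite -[_ * _]addr0 P_lin.
Qed.

Lemma mulmx2E (R : pzRingType) (A B : 'M[R]_2) i j :
  (A *m B) i j = A i 0 * B 0 j + A i 1 * B 1 j.
Proof.
rewrite !mxE !big_ord_recl big_ord0 addr0.
by congr (A i _ * B _ j + A i _ * B _ j); apply: val_inj.
Qed.

Lemma ord2P (i : 'I_2) : i = 0 \/ i = 1.
Proof. by case: i => [[|[|//]] Hi]; [left|right]; apply: val_inj. Qed.

Lemma card_mx_entries_in (T : finType) m n (A : {set T}) (P : {set 'M[T]_(m, n)}) :
  (forall g : 'M_(m, n), g \in P -> forall i j, g i j \in A) -> (#|P| <= #|A| ^ (m * n))%N.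
Proof.
move=> PA; pose AM := [set map_mx val M | M : 'M[{x | x \in A}]_(m, n)].
have /subset_leq_card/leq_trans-> // : P \subset AM.
  apply/subsetP => g gP; apply/imsetP.
  exists (\matrix_(i, j) (exist _ (g i j) (PA g gP i j))) => //.
  by apply/matrixP => i j; rewrite !mxE.
by apply: leq_trans (leq_imset_card _ _) _; rewrite card_mx card_sig.
Qed.

Definition mx2 (R : pzRingType) (a b c d : R) : 'M[R]_2 :=
  \matrix_(i, j) if i == 0 then if j == 0 then a else b else if j == 0 then c else d.

Lemma mx2_mul_eq1 (R : pzRingType) (a b c d a' b' c' d' : R) :
  a * a' + b * c' = 1 -> a * b' + b * d' = 0 -> c * a' + d * c' = 0 -> c * b' + d * d' = 1 ->
  mx2 a b c d *m mx2 a' b' c' d' = 1%:M.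
Proof.
move=> e00 e01 e10 e11; apply/matrixP => i j; rewrite mulmx2E !mxE.
by case: (ord2P i) => ->; case: (ord2P j) => ->.
Qed.

Section RowAction.
Variable R : pzRingType.
Implicit Types (g h : 'M[R]_2) (w : R * R).

Definition rmul2 w g : R * R := (w.1 * g 0 0 + w.2 * g 1 0, w.1 * g 0 1 + w.2 * g 1 1).

Lemma rmul2M w g h : rmul2 (rmul2 w g) h = rmul2 w (g *m h).
Proof.
by congr (_, _); rewrite !mulmx2E !mulrDl !mulrDr !mulrA addrACA.
Qed.

Lemma rmul2_1 w : rmul2 w 1%:M = w.
Proof. by case: w => a b; rewrite /rmul2 !mxE /= !mulr1 !mulr0 addr0 add0r. Qed.

Lemma rmul2B w w' l g :
  rmul2 (w'.1 - l * w.1, w'.2 - l * w.2) g =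
  ((rmul2 w' g).1 - l * (rmul2 w g).1, (rmul2 w' g).2 - l * (rmul2 w g).2).
Proof. by congr (_, _); rewrite /= !mulrBl mulrDr !mulrA opprD addrACA. Qed.

End RowAction.

Section Points.
Variable R : finUnitRingType.
Implicit Types a b y m l : R.

Lemma admissible_1x y : admissible 1 y.
Proof.
exists (mx2 1 y 0 1); split; last by rewrite !mxE.
exists (mx2 1 (- y) 0 1); split; apply: mx2_mul_eq1;
  by rewrite ?mul1r ?mulr1 ?mul0r ?mulr0 ?addr0 ?add0r ?addNr ?addrN.
Qed.

Lemma admissible_x1 m : admissible m 1.
Proof.
exists (mx2 m 1 1 0); split; last by rewrite !mxE.
exists (mx2 0 1 1 (- m)); split; apply: mx2_mul_eq1;
  by rewrite ?mul1r ?mulr1 ?mul0r ?mulr0 ?addr0 ?add0r ?addNr ?addrN ?mulrN.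
Qed.

Lemma submod_unit_scale l a b : l \is a GRing.unit -> submod (l * a) (l * b) = submod a b.
Proof.
move=> Ul; apply/setP => z; apply/imsetP/imsetP => [[r _ ->]|[r _ ->]].
  by exists (r * l) => //; rewrite !mulrA.
by exists (r * l^-1) => //; rewrite !mulrA mulrVK.
Qed.

End Points.

Section LocalRing.
Variables (K : finFieldType) (R : finUnitRingType) (f : {rmorphism K -> R}).
Hypothesis locR : local_ring R.
Implicit Types x y u v m : R.

Lemma nonunitD x y : x \isn't a GRing.unit -> y \isn't a GRing.unit -> x + y \isn't a GRing.unit.
Proof. by case: locR => H _ _; apply: H. Qed.

Lemma nonunitMl x y : y \isn't a GRing.unit -> x * y \isn't a GRing.unit.
Proof. by case: locR => _ H _; apply: H. Qed.

Lemma nonunitMr x y : x \isn't a GRing.unit -> x * y \isn't a GRing.unit.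
Proof. by case: locR => _ _ H; apply: H. Qed.

Lemma nonunitN x : x \isn't a GRing.unit -> - x \isn't a GRing.unit.
Proof. by rewrite -mulN1r; apply: nonunitMl. Qed.

Lemma nonunitB x y : x \isn't a GRing.unit -> y \isn't a GRing.unit -> x - y \isn't a GRing.unit.
Proof. by move=> Nx Ny; rewrite nonunitD ?nonunitN. Qed.

Lemma nonunit_subC x y : x - y \isn't a GRing.unit -> y - x \isn't a GRing.unit.
Proof. by move=> Nxy; rewrite -opprB nonunitN. Qed.

Lemma unitDnonunit u m : u \is a GRing.unit -> m \isn't a GRing.unit -> u + m \is a GRing.unit.
Proof. by move=> Uu Nm; apply: contraT => /nonunitB/(_ Nm); rewrite addrK Uu. Qed.

Lemma unit_congr u v : u - v \isn't a GRing.unit -> (u \is a GRing.unit) = (v \is a GRing.unit).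
Proof.
move=> Nuv; apply/idP/idP => U; last by rewrite -(subrKC v u) unitDnonunit.
by rewrite -(subrKC u v) unitDnonunit // nonunit_subC.
Qed.

(* [repM x] is a representative of the class [x + M], M the ideal of nonunits. *)
Definition repM x : R := odflt x [pick y | x - y \isn't a GRing.unit].

Lemma repM_sub x : x - repM x \isn't a GRing.unit.
Proof. by rewrite /repM; case: pickP => [//|/(_ x)]; rewrite subrr unitr0. Qed.

Lemma repM_congr x y : x - y \isn't a GRing.unit -> repM x = repM y.
Proof.
move=> Nxy; rewrite /repM (@eq_pick _ _ (fun z => y - z \isn't a GRing.unit)).
  by case: pickP => [//|/(_ y)]; rewrite subrr unitr0.
move=> z /=; apply/idP/idP => Nz.
  by rewrite -(subrKA x y) nonunitD // nonunit_subC.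
by rewrite -(subrKA y x) nonunitD.
Qed.

Lemma repM_id x : repM (repM x) = repM x.
Proof. by apply: repM_congr; rewrite nonunit_subC // repM_sub. Qed.

Lemma eq_repM x y : repM x = repM y -> x - y \isn't a GRing.unit.
Proof.
move=> e; rewrite -(subrKA (repM x) x) nonunitD ?repM_sub //.
by rewrite e nonunit_subC ?repM_sub.
Qed.

Definition nonunits := [set m : R | m \isn't a GRing.unit].
Definition residues := [set repM x | x in R].

Lemma repM_split_inj : injective (fun x => (repM x, x - repM x)).
Proof. by move=> x y [e1 e2]; rewrite -(subrK (repM x) x) e2 e1 subrK. Qed.

Lemma card_residues_nonunits : #|R| = (#|residues| * #|nonunits|)%N.
Proof.
rewrite -cardsX -cardsT -(card_imset _ repM_split_inj); apply: eq_card => -[r m].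
rewrite in_setX !inE /=; apply/imsetP/andP => [[x _ [-> ->]]|].
  by rewrite imset_f ?repM_sub.
case=> /imsetP[z _ ->] Nm; exists (repM z + m) => //.
have -> : repM (repM z + m) = repM z.
  by rewrite -[RHS]repM_id; apply: repM_congr; rewrite addrAC subrr add0r.
by rewrite addrAC subrr add0r.
Qed.

Implicit Types (g h : 'M[R]_2) (w : R * R).

Definition unimodular w := (w.1 \is a GRing.unit) || (w.2 \is a GRing.unit).

Lemma nonunimodular_rmul2 w g : ~~ unimodular w -> ~~ unimodular (rmul2 w g).
Proof.
rewrite /unimodular !negb_or => /andP[N1 N2].
by rewrite !nonunitD ?nonunitMr.
Qed.

Lemma unimodular_rmul2 w g h : g *m h = 1%:M -> unimodular w -> unimodular (rmul2 w g).
Proof.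
move=> gh; apply: contraLR => /(nonunimodular_rmul2 h).
by rewrite rmul2M gh rmul2_1.
Qed.

(* The projective line over the residue field [R/M] is encoded as [option R]:
   [Some r] is the class of [R(1, r)], and [None] the point at infinity. *)
Definition reduce_point w : option R :=
  if w.1 \is a GRing.unit then Some (repM (w.1^-1 * w.2)) else None.

Lemma reduce_point_congr w w' : w.1 - w'.1 \isn't a GRing.unit ->
  w.2 - w'.2 \isn't a GRing.unit -> reduce_point w = reduce_point w'.
Proof.
case: w w' => [u v] [u' v'] /= Nu Nv; rewrite /reduce_point /= -(unit_congr Nu).
case: ifP => // Uu; have Uu' : u' \is a GRing.unit by rewrite -(unit_congr Nu).
congr Some; apply: repM_congr.
have -> : u^-1 * v - u'^-1 * v' = u^-1 * (v - v') + u^-1 * (u' - u) * (u'^-1 * v').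
  rewrite [u^-1 * (u' - u)]mulrBr mulVr // mulrBl mul1r mulrA mulrK //.
  by rewrite mulrBr addrA subrK.
by apply: nonunitD; [exact: nonunitMl | apply/nonunitMr/nonunitMl/nonunit_subC].
Qed.

Definition scaled_congr w w' := exists l : R,
  w'.1 - l * w.1 \isn't a GRing.unit /\ w'.2 - l * w.2 \isn't a GRing.unit.

Lemma reduce_point_scaled w w' : unimodular w ->
  reduce_point w = reduce_point w' -> scaled_congr w w'.
Proof.
case: w w' => [u v] [u' v']; rewrite /unimodular /reduce_point /=.
case: ifP => Uu; case: ifP => Uu' //= Uv; last move=> _.
  case=> /eq_repM Ne; exists (u' * u^-1); split; first by rewrite mulrVK // subrr unitr0.
  have -> : v' - u' * u^-1 * v = u' * (u'^-1 * v' - u^-1 * v).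
    by rewrite mulrBr !mulrA mulrV // mul1r.
  exact/nonunitMl/nonunit_subC.
exists (v' * v^-1); split; last by rewrite mulrVK // subrr unitr0.
by apply: nonunitB; [rewrite Uu' | apply: nonunitMl; rewrite Uu].
Qed.

Lemma scaled_congr_rmul2 w w' g h : g *m h = 1%:M ->
  scaled_congr (rmul2 w g) (rmul2 w' g) -> scaled_congr w w'.
Proof.
move=> gh [l [N1 N2]]; exists l.
pose d := ((rmul2 w' g).1 - l * (rmul2 w g).1, (rmul2 w' g).2 - l * (rmul2 w g).2).
have : ~~ unimodular d by rewrite /unimodular /= negb_or N1 N2.
move/(nonunimodular_rmul2 h); rewrite /d -rmul2B rmul2M gh rmul2_1.
by rewrite /unimodular negb_or => /andP.
Qed.

Definition fpair (xy : K * K) : R * R := (f xy.1, f xy.2).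

Lemma unimodular_fpair xy : xy != (0, 0) -> unimodular (fpair xy).
Proof. by case: xy => x y; rewrite /unimodular /= !fmorph_unit xpair_eqE negb_and. Qed.

Definition Kpoint (o : option K) : K * K := if o is Some t then (1, t) else (0, 1).

Lemma Kpoint_neq0 o : Kpoint o != (0, 0).
Proof. by case: o => [t|]; rewrite xpair_eqE oner_eq0 ?andbF. Qed.

Lemma scaled_congr_Kpoint o o' :
  scaled_congr (fpair (Kpoint o)) (fpair (Kpoint o')) -> o = o'.
Proof.
case: o o' => [t|] [t'|] [l] //=; rewrite ?rmorph1 ?rmorph0 ?mulr1 ?mulr0 ?subr0 ?sub0r.
- case=> N1l Nt; congr Some; apply/eqP; rewrite eq_sym -subr_eq0.
  apply/negPn; rewrite -(fmorph_unit f) rmorphB.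
  have -> : f t' - f t = (f t' - l * f t) - (1 - l) * f t.
    by rewrite mulrBl mul1r opprB addrA subrK.
  by rewrite nonunitB ?nonunitMr.
- case=> Nl N1; suff : (1 : R) \isn't a GRing.unit by rewrite unitr1.
  by rewrite -(subrK (l * f t) 1) nonunitD // nonunitMr // -[l]opprK nonunitN.
- by rewrite unitr1; case.
Qed.

Definition chain_image g : {set option R} :=
  [set reduce_point (rmul2 (fpair xy) g) | xy in [set xy : K * K | xy != (0, 0)]].

Lemma chain_image_card g h : g *m h = 1%:M -> (#|K|.+1 <= #|chain_image g|)%N.
Proof.
move=> gh; pose phi o := reduce_point (rmul2 (fpair (Kpoint o)) g).
have phi_inj : injective phi.
  move=> o o' e; apply/scaled_congr_Kpoint/(scaled_congr_rmul2 gh).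
  exact: reduce_point_scaled (unimodular_rmul2 gh (unimodular_fpair (Kpoint_neq0 o))) e.
rewrite -(card_option K) -cardsT -(card_imset _ phi_inj).
apply/subset_leq_card/subsetP => _ /imsetP[o _ ->].
by apply: imset_f; rewrite inE Kpoint_neq0.
Qed.

Lemma chain_image_repM g : chain_image (map_mx repM g) = chain_image g.
Proof.
apply: eq_imset => xy; apply: reduce_point_congr; rewrite /= !mxE opprD addrACA -!mulrBr.
  by apply: nonunitD; apply: nonunitMl; apply: nonunit_subC; apply: repM_sub.
by apply: nonunitD; apply: nonunitMl; apply: nonunit_subC; apply: repM_sub.
Qed.

Definition reduced_chains : {set 'M[R]_2} :=
  [set g : 'M[R]_2 | [forall i, forall j, g i j \in residues] && (#|K|.+1 <= #|chain_image g|)%N].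

Lemma card_reduced_chains : (#|reduced_chains| <= #|residues| ^ 4)%N.
Proof.
apply: card_mx_entries_in => g; rewrite inE => /andP[/forallP res_g _] i j.
exact: (forallP (res_g i)).
Qed.

Definition lift_points (S : {set option R}) : {set {set R * R}} :=
  [set submod 1 y | y in [set y | Some (repM y) \in S]] :|:
  [set submod m 1 | m in [set m | (m \isn't a GRing.unit) && (None \in S)]].

Lemma lift_points_point (S : {set option R}) p : p \in lift_points S -> is_point p.
Proof.
case/setUP => /imsetP[y _ ->]; first by exists 1, y; split=> //; apply: admissible_1x.
by exists y, 1; split=> //; apply: admissible_x1.
Qed.

Lemma reduce_point_lift (S : {set option R}) w : unimodular w -> reduce_point w \in S ->
  submod w.1 w.2 \in lift_points S.
Proof.
case: w => u v; rewrite /unimodular /reduce_point /=; case: ifP => Uu /= Uv wS.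
  apply/setUP; left; apply/imsetP; exists (u^-1 * v); first by rewrite inE.
  by rewrite -(submod_unit_scale 1 (u^-1 * v) Uu) mulr1 mulrA mulrV // mul1r.
apply/setUP; right; apply/imsetP; exists (v^-1 * u).
  by rewrite inE wS andbT nonunitMl ?Uu.
by rewrite -(submod_unit_scale (v^-1 * u) 1 Uv) mulr1 mulrA mulrV // mul1r.
Qed.

Lemma lift_points_blocking (S : {set option R}) :
  (forall g, g \in reduced_chains -> chain_image g :&: S != set0) ->
  blocking_set f (lift_points S).
Proof.
move=> hitS; split=> [p|g [h [gh _]]]; first exact: lift_points_point.
have /hitS/set0Pn[c /setIP[]] : map_mx repM g \in reduced_chains.
  rewrite inE chain_image_repM (chain_image_card gh) andbT.
  by apply/forallP => i; apply/forallP => j; rewrite mxE imset_f.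
rewrite chain_image_repM => /imsetP[[x y]]; rewrite inE => xy0 -> cS.
exists (act g (f x) (f y)); split; last by exists x, y.
exact: reduce_point_lift (unimodular_rmul2 gh (unimodular_fpair xy0)) cS.
Qed.

Lemma card_lift_points (S : {set option R}) : (#|lift_points S| <= #|S|.+1 * #|nonunits|)%N.
Proof.
rewrite mulSn addnC; apply: leq_trans (leq_card_setU _ _).1 _; apply: leq_add.
  apply: leq_trans (leq_imset_card _ _) _.
  rewrite -(card_imset _ repM_split_inj).
  apply: leq_trans (_ : #|[set r | Some r \in S]| * #|nonunits| <= _)%N.
    rewrite -cardsX; apply/subset_leq_card/subsetP => p /imsetP[y]; rewrite inE => yS ->.
    by rewrite !inE yS repM_sub.
  rewrite leq_mul2r; apply/orP; right.
  rewrite -(card_imset [set r | Some r \in S] Some_inj).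
  by apply/subset_leq_card/subsetP => o /imsetP[r]; rewrite inE => rS ->.
apply: leq_trans (leq_imset_card _ _) _.
by apply/subset_leq_card/subsetP => m; rewrite !inE => /andP[].
Qed.

Definition residue_line : {set option R} := None |: [set Some r | r in residues].

Lemma card_residue_line : #|residue_line| = #|residues|.+1.
Proof.
rewrite cardsU1 card_imset; last exact: Some_inj.
by case: imsetP => // -[].
Qed.

Lemma large_chain_images : large_subfamily chain_image residue_line #|K|.+1 reduced_chains.
Proof.
move=> g; rewrite inE => /andP[_ ->]; split=> //.
apply/subsetP => _ /imsetP[xy _ ->]; rewrite /reduce_point; case: ifP => _.
  by rewrite setU1r ?imset_f.
exact: setU11.
Qed.

Lemma card_nonunits delta : Kdim_is f (fun x : R => x \isn't a GRing.unit) delta ->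
  #|nonunits| = (#|K| ^ delta)%N.
Proof.
move=> dimM; rewrite -(card_Kspace dimM); first by apply: eq_card => x; rewrite inE.
  by rewrite -topredE /= unitr0.
by move=> k x y; rewrite -!topredE /= => Nx Ny; rewrite nonunitD ?nonunitMl.
Qed.

Lemma card_residues e delta : Kdim_is f (fun _ => true) (e + delta) ->
  Kdim_is f (fun x : R => x \isn't a GRing.unit) delta -> #|residues| = (#|K| ^ e)%N.
Proof.
move=> dimR /card_nonunits cardM.
have cardR : #|R| = (#|K| ^ (e + delta))%N by rewrite -(card_Kspace dimR).
have := card_residues_nonunits; rewrite cardR cardM expnD => /eqP.
by rewrite eqn_pmul2r ?expn_gt0 ?(ltnW (card_finNzRing_gt1 K)) // => /eqP.
Qed.

End LocalRing.

Local Close Scope ring_scope.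

Lemma expn_lt_pow2_trunc_log q e : 0 < q -> 0 < e -> q ^ e < 2 ^ (e * (trunc_log 2 q).+1).
Proof.
move=> q_gt0 e_gt0; rewrite mulnC expnM ltn_exp2r //.
by case/andP: (trunc_log_bounds (isT : 1 < 2) q_gt0).
Qed.

Lemma exists_blocking_set_nat (K : finFieldType) (R : finUnitRingType)
    (f : {rmorphism K -> R}) (d delta : nat) :
  local_ring R -> Kdim_is f (fun _ => true) d ->
  Kdim_is f (fun x : R => x \isn't a GRing.unit) delta -> d = 2 + delta ->
  exists B, blocking_set f B /\ #|B| <= (8 * trunc_log 2 #|K| + 9) * #|K| ^ (d - 1).
Proof.
move=> locR dimR dimM d_eq; subst d; set q := #|K|.
have q_gt0 : 0 < q := ltnW (card_finNzRing_gt1 K).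
have cardRes := card_residues locR dimR dimM.
have cardV : #|residue_line R| <= q.+1 * q by rewrite card_residue_line cardRes; nia.
have cardJ : #|reduced_chains f| < 2 ^ (8 * (trunc_log 2 q).+1).
  apply: leq_ltn_trans (card_reduced_chains f) _.
  by rewrite cardRes -expnM expn_lt_pow2_trunc_log.
have [|S [cardS hitS]] := exists_hitting_set _ cardV q_gt0 (large_chain_images (f := f)) cardJ.
  by rewrite card_residue_line.
exists (lift_points S); split; first exact: lift_points_blocking locR _ hitS.
apply: leq_trans (card_lift_points S) _.
rewrite (card_nonunits locR dimM) subSS expnS mulnA leq_mul2r; apply/orP; right.
by apply: leq_ltn_trans cardS _; rewrite mulnC ltn_pmul2r //; lia.
Qed.

Module RealBound.
From Stdlib Require Import Rdefinitions Raxioms RIneq Rfunctions Rpower Lra.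
Local Open Scope R_scope.

Lemma INR_expn m n : INR (expn m n) = INR m ^ n.
Proof. by elim: n => [|n IH] //; rewrite expnS -multE mult_INR IH. Qed.

Lemma ln_trunc_log2 q : (0 < q)%nat -> INR (trunc_log 2 q) * ln 2 <= ln (INR q).
Proof.
move=> q_gt0; have := trunc_log_bounds (isT : (1 < 2)%nat) q_gt0 => /andP[/leP t_le _].
rewrite -ln_pow; last lra.
have {t_le}: 2 ^ trunc_log 2 q <= INR q by rewrite -[2]/(INR 2) -INR_expn; apply: le_INR.
case/Rle_lt_or_eq_dec => [lt|->]; last lra.
by apply/Rlt_le/ln_increasing => //; apply: pow_lt; lra.
Qed.

Lemma INR_card_bound b q e : (1 < q)%nat ->
  (b <= (8 * trunc_log 2 q + 9) * expn q e)%nat -> INR b <= INR 36 * INR q ^ e * ln (INR q).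
Proof.
move=> q_gt1 /leP/le_INR; rewrite mult_INR INR_expn => b_le.
have t_ge1 : 1 <= INR (trunc_log 2 q) by apply/(le_INR 1)/leP/trunc_log_max.
have coef_le : INR (8 * trunc_log 2 q + 9) <= INR 36 * ln (INR q).
  have := ln_trunc_log2 (ltnW q_gt1); have := ln_lt_2.
  rewrite plus_INR mult_INR /=; nra.
have := Rmult_le_compat_r _ _ _ (pow_le _ e (pos_INR q)) coef_le; lra.
Qed.

End RealBound.

Theorem mainTheorem6 :
  exists c : Rdefinitions.R, Rdefinitions.Rlt (Rdefinitions.IZR BinNums.Z0) c /\
  forall (K : finFieldType) (R : finUnitRingType) (f : {rmorphism K -> R})
         (d delta : nat),
    local_ring R ->
    Kdim_is f (fun _ => true) d ->
    Kdim_is f (fun x : R => x \isn't a GRing.unit) delta ->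
    d = (2 + delta)%N ->
    exists B : {set {set R * R}},
      blocking_set f B /\
      Rdefinitions.Rle (Raxioms.INR #|B|)
        (Rdefinitions.Rmult
           (Rdefinitions.Rmult c (Rpow_def.pow (Raxioms.INR #|K|) (d - 1)))
           (Rpower.ln (Raxioms.INR #|K|))).
Proof.
exists (Raxioms.INR 36); split; first exact/RIneq.lt_0_INR/ltP.
move=> K R f d delta locR dimR dimM d_eq.
have [B [blockB cardB]] := exists_blocking_set_nat locR dimR dimM d_eq.
by exists B; split; last exact: RealBound.INR_card_bound (card_finNzRing_gt1 K) cardB.
Qed.
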